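(* Let $G$ be a finite, connected, simple, bridgeless, triangle-free cubic graph, and let $\Lambda$ be a valid labeling of $\mathfrak{L}_2(G)$. Let $\mathfrak{G}_\Lambda$ be the graph with vertex set $\Gamma_\Lambda$ in which $\gamma,\phi\in\Gamma_\Lambda$ are joined by a single edge (a loop if $\gamma=\phi$) if and only if $\gamma$ and $\phi$ are adjacent. Then $\mathfrak{G}_\Lambda$ is a connected graph, simple apart from possible loops.
   Context: $\mathcal{L}(H)$ is the line graph of $H$. Let $\mathcal{T}$ be the set of triangles of $\mathcal{L}(\mathcal{L}(G))$ formed by the three edges of a triangle of $\mathcal{L}(G)$. $\mathfrak{L}_2(G)$ has the vertex set of $\mathcal{L}(\mathcal{L}(G))$ and the edges of $\mathcal{L}(\mathcal{L}(G))$ not in any triangle of $\mathcal{T}$. For each edge $e$ of $G$, the reduced clique $\mathbb{X}_e$ is the subgraph of $\mathfrak{L}_2(G)$ on the four edges of $\mathcal{L}(G)$ incident to $e$, with all edges of $\mathfrak{L}_2(G)$ among them (a 4-cycle); $\mathcal{X}$ is the set of reduced cliques. A labeling $\Lambda$ gives each edge of $\mathfrak{L}_2(G)$ a label in $\{0,1\}$ ($1$ = open); it is valid if in every reduced clique each vertex is incident to two edges of that clique with different labels. $\Gamma_\Lambda$ is the set of connected components (cycles) of the subgraph formed by the open edges. Two cycles $\gamma_1,\gamma_2\in\Gamma_\Lambda$ are adjacent if there is a reduced clique $\mathbb{X}\in\mathcal{X}$ containing an edge of $\gamma_1$ and an edge of $\gamma_2$. *)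

From mathcomp Require Import all_boot.
Set Implicit Arguments. Unset Strict Implicit. Unset Printing Implicit Defensive.

Section Defs.

Variable T : finType.

Definition line_verts (A : {set T}) (r : rel T) : {set {set T}} :=
  [set e : {set T} | [exists x in A, exists y in A, r x y && (e == [set x; y])]].

Definition line_rel (A : {set T}) (r : rel T) : rel {set T} :=
  fun e f => [&& e \in line_verts A r, f \in line_verts A r, e != f
                 & ~~ [disjoint e & f]].

End Defs.

Section Frak.
Variables (V : finType) (adj : rel V).

Definition LV : {set {set V}} := line_verts [set: V] adj.
Definition LR : rel {set V} := line_rel [set: V] adj.
Definition LLV : {set {set {set V}}} := line_verts LV LR.
Definition LLR : rel {set {set V}} := line_rel LV LR.

(* the edge {P,Q} of L(L(G)) lies in a triangle of T, i.e. a triangle of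
   L(L(G)) formed by the three edges {e,f},{f,g},{e,g} of a triangle e,f,g of L(G) *)
Definition in_T_triangle (P Q : {set {set V}}) : bool :=
  [exists e, exists f, exists g,
     [&& LR e f, LR f g, LR e g,
         P \in [set [set e; f]; [set f; g]; [set e; g]]
       & Q \in [set [set e; f]; [set f; g]; [set e; g]]]].

Definition L2R : rel {set {set V}} := fun P Q => LLR P Q && ~~ in_T_triangle P Q.

(* a labeling assigns a label to each edge {P,Q} of frak L_2(G) (only its
   values on such edges matter); true = 1 = open *)
Definition labeling := {set {set {set V}}} -> bool.

Definition Xverts (e : {set V}) : {set {set {set V}}} :=
  [set P in LLV | e \in P].

Definition valid (lab : labeling) : Prop :=
  forall e, e \in LV -> forall P, P \in Xverts e ->
    exists Q R, [/\ Q \in Xverts e, R \in Xverts e, L2R P Q, L2R P R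
                  & lab [set P; Q] != lab [set P; R]].

Definition opn (lab : labeling) : rel {set {set V}} :=
  fun P Q => L2R P Q && lab [set P; Q].

Definition Gamma (lab : labeling) : {set {set {set {set V}}}} :=
  [set [set Q | connect (opn lab) P Q] | P in [set P | [exists Q, opn lab P Q]]].

Definition cyc_adj (lab : labeling) : rel {set {set {set V}}} :=
  fun g1 g2 =>
    [&& g1 \in Gamma lab, g2 \in Gamma lab &
     [exists e in LV, exists P, exists Q, exists P', exists Q',
        [&& opn lab P Q, P \in g1, Q \in g1, e \in P, e \in Q,
            opn lab P' Q', P' \in g2, Q' \in g2, e \in P' & e \in Q']]].

End Frak.

Definition simple_graph (V : finType) (adj : rel V) : Prop :=
  symmetric adj /\ irreflexive adj.

Definition cubic (V : finType) (adj : rel V) : Prop :=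
  forall v, #|[set w | adj v w]| = 3.

Definition connected_graph (V : finType) (adj : rel V) : Prop :=
  forall u v, connect adj u v.

Definition bridgeless (V : finType) (adj : rel V) : Prop :=
  forall u v, adj u v ->
    connect (fun x y => adj x y && ([set x; y] != [set u; v])) u v.

Definition triangle_free (V : finType) (adj : rel V) : Prop :=
  forall u v w, adj u v -> adj v w -> ~~ adj w u.

(* Validity gives every vertex P of L(L(G)) an open edge inside each reduced
   clique X_e with e in P, so P lies on a cycle meeting X_e; hence two vertices
   of L(L(G)) sharing an edge e of G lie on equal or adjacent cycles.  Walking
   along a path of L(G) and using the vertices [e; f] of L(L(G)) for consecutive
   edges e, f then links any two cycles, and L(G) is connected because G is. *)

From mathcomp Require Import all_boot.
Set Implicit Arguments. Unset Strict Implicit. Unset Printing Implicit Defensive.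

Section LineGraph.
Variables (T : finType) (A : {set T}) (r : rel T).

Lemma line_vertsP e :
  reflect (exists x y, [/\ x \in A, y \in A, r x y & e = [set x; y]])
          (e \in line_verts A r).
Proof.
rewrite inE; apply: (iffP existsP) => [[x /andP [xA /existsP [y]]]|[x [y [xA yA rxy ->]]]].
  by case/and3P=> yA rxy /eqP ->; exists x, y.
by exists x; rewrite xA; apply/existsP; exists y; rewrite yA rxy eqxx.
Qed.

Lemma pair_line_verts x y :
  x \in A -> y \in A -> r x y -> [set x; y] \in line_verts A r.
Proof. by move=> xA yA rxy; apply/line_vertsP; exists x, y. Qed.

Lemma line_verts_sub e x : e \in line_verts A r -> x \in e -> x \in A.
Proof. by case/line_vertsP=> [a [b [aA bA _ ->]]]; rewrite !inE => /orP [] /eqP ->. Qed.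

Lemma line_verts_neq0 e : e \in line_verts A r -> exists x, x \in e.
Proof. by case/line_vertsP=> [a [b [_ _ _ ->]]]; exists a; rewrite !inE eqxx. Qed.

Lemma line_rel_mem e f :
  line_rel A r e f -> e \in line_verts A r /\ f \in line_verts A r.
Proof. by case/and4P. Qed.

Lemma connect_line_rel_share e f x :
  e \in line_verts A r -> f \in line_verts A r -> x \in e -> x \in f ->
  connect (line_rel A r) e f.
Proof.
move=> eL fL xe xf; have [-> | nef] := eqVneq e f; first exact: connect0.
apply: connect1; rewrite /line_rel eL fL nef /=.
by apply/negP => /disjointFr /(_ xe); rewrite xf.
Qed.

End LineGraph.

Lemma connect_line_graph (T : finType) (r : rel T) x y e f :
  connect r x y ->
  e \in line_verts [set: T] r -> f \in line_verts [set: T] r -> x \in e -> y \in f ->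
  connect (line_rel [set: T] r) e f.
Proof.
case/connectP=> p; elim: p x e => [|z p IH] x e /= => [_ -> | /andP [rxz zp] y_last];
  first exact: connect_line_rel_share.
move=> eL fL xe yf; have xzL := pair_line_verts (in_setT x) (in_setT z) rxz.
apply: connect_trans (connect_line_rel_share eL xzL xe _) (IH _ _ zp y_last xzL fL _ yf);
by rewrite !inE eqxx ?orbT.
Qed.

Section Cycles.
Variables (V : finType) (adj : rel V) (lab : labeling V).
Hypothesis lab_valid : valid adj lab.

Definition cycle_of P := [set Q | connect (opn adj lab) P Q].

Lemma cycle_of_Gamma P Q : opn adj lab P Q -> cycle_of P \in Gamma adj lab.
Proof. by move=> PQ; apply/imsetP; exists P => //; rewrite inE; apply/existsP; exists Q. Qed.

Lemma Gamma_cycle_of g :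
  g \in Gamma adj lab -> exists2 P, P \in LLV adj & g = cycle_of P.
Proof.
case/imsetP=> P; rewrite inE => /existsP [Q /andP [/andP [/line_rel_mem [PL _] _] _]] ->.
by exists P.
Qed.

Lemma opn_in_clique P e :
  P \in LLV adj -> e \in P -> exists2 Q : {set {set V}}, e \in Q & opn adj lab P Q.
Proof.
move=> PL eP; have PX : P \in Xverts adj e by rewrite inE PL eP.
have [Q [R [QX RX PQ PR labQR]]] := lab_valid (line_verts_sub PL eP) PX.
move: QX RX; rewrite !inE => /andP [_ eQ] /andP [_ eR].
case labPQ: (lab [set P; Q]); first by exists Q; rewrite // /opn PQ labPQ.
by exists R; rewrite // /opn PR; move: labQR; rewrite labPQ; case: (lab _).
Qed.

Lemma cyc_adj_share P P' e :
  P \in LLV adj -> P' \in LLV adj -> e \in P -> e \in P' ->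
  cyc_adj adj lab (cycle_of P) (cycle_of P').
Proof.
move=> PL P'L eP eP'.
have [Q eQ PQ] := opn_in_clique PL eP; have [Q' eQ' PQ'] := opn_in_clique P'L eP'.
rewrite /cyc_adj (cycle_of_Gamma PQ) (cycle_of_Gamma PQ') /=.
apply/existsP; exists e; rewrite (line_verts_sub PL eP) /=.
apply/existsP; exists P; apply/existsP; exists Q; apply/existsP; exists P'.
apply/existsP; exists Q'.
by rewrite PQ PQ' !inE !connect0 !connect1 ?eP ?eQ ?eP' ?eQ'.
Qed.

Lemma connect_cycles_along_line_path e f P Q :
  connect (LR adj) e f -> P \in LLV adj -> Q \in LLV adj -> e \in P -> f \in Q ->
  connect (cyc_adj adj lab) (cycle_of P) (cycle_of Q).
Proof.
case/connectP=> p; elim: p e P => [|e' p IH] e P /= => [_ -> | /andP [ee' e'p] f_last].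
  by move=> PL QL fP fQ; apply/connect1/(cyc_adj_share PL QL fP fQ).
move=> PL QL eP fQ; have [eL e'L] := line_rel_mem ee'.
have ee'L : [set e; e'] \in LLV adj by apply: pair_line_verts.
apply: connect_trans (connect1 (cyc_adj_share PL ee'L eP _)) (IH _ _ e'p f_last ee'L QL _ fQ);
by rewrite !inE eqxx ?orbT.
Qed.

End Cycles.

Theorem lemma2p11 (V : finType) (adj : rel V)
  (Hs : simple_graph adj) (Hcub : cubic adj) (Hcon : connected_graph adj)
  (Hbr : bridgeless adj) (Htf : triangle_free adj)
  (lab : labeling V) (Hval : valid adj lab) :
  forall g phi, g \in Gamma adj lab -> phi \in Gamma adj lab ->
    connect (cyc_adj adj lab) g phi.
Proof.
move=> g phi /Gamma_cycle_of [P PL ->] /Gamma_cycle_of [Q QL ->].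
have [e eP] := line_verts_neq0 PL; have [f fQ] := line_verts_neq0 QL.
have eL := line_verts_sub PL eP; have fL := line_verts_sub QL fQ.
have [x xe] := line_verts_neq0 eL; have [y yf] := line_verts_neq0 fL.
have ef : connect (LR adj) e f := connect_line_graph (Hcon x y) eL fL xe yf.
exact: (connect_cycles_along_line_path Hval ef PL QL eP fQ).
Qed.
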